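(* Let $J$ be an abelian topological semigroup with identity $0$, $X$ a topological vector space over $\mathbf{C}$, and $\phi\in P^n(J,X)$, so that $\phi(t+ms)=\sum_{j=0}^n a_j(t,s)m^j$ for all $t,s\in J$, $m\in\mathbf{Z}_+$, with $a_j(t,s)\in X$. Then $a_n(t,s)=a_n(0,s)$ for all $t,s\in J$.
   Context: $\mathbf{Z}_+=\{0,1,2,\dots\}$. A continuous $p:J\to X$ is a polynomial of degree at most $n$ if for all $s,t\in J$ the map $m\mapsto p(s+mt)$, $m\in\mathbf{Z}_+$, is a polynomial in $m$ of degree at most $n$ with coefficients in $X$; $P^n(J,X)$ is the space of such polynomials. *)

From HB Require Import structures.
From mathcomp Require Import all_boot all_order all_algebra.
From mathcomp Require Import all_classical all_reals all_analysis.
From mathcomp Require Import complex.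
Set Implicit Arguments. Unset Strict Implicit. Unset Printing Implicit Defensive.
Import Order.TTheory GRing.Theory Num.Theory.
Local Open Scope ring_scope.
Local Open Scope complex_scope.

Definition poly_seq_le (C : numDomainType) (X : lmodType C) (n : nat)
  (q : nat -> X) : Prop :=
  exists c : nat -> X, forall m : nat, q m = \sum_(j < n.+1) ((m%:R : C) ^+ j) *: c j.

Definition Pn (J : TopologicalNmodule.type) (C : numDomainType)
  (X : topologicalLmodType C) (n : nat) (p : J -> X) : Prop :=
  continuous p /\ forall s t : J, poly_seq_le n (fun m : nat => p (s + t *+ m)).

From HB Require Import structures.
From mathcomp Require Import all_boot all_order all_algebra.
From mathcomp Require Import all_classical all_reals all_analysis.
From mathcomp Require Import complex.
Local Open Scope ring_scope.
Local Open Scope complex_scope.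

Import Order.TTheory GRing.Theory Num.Theory.

(* Put f r m := phi (r t + m s).  For fixed r, f is a polynomial in m whose
   n-th difference in m is n! a_n(r t, s); since f is also a polynomial of
   degree <= n in r, so is this difference:  n! a_n(r t, s) = p(r) with
   deg p <= n.  Along the rays m = N r, f(r, N r) = phi (r (t + N s)) is again
   a polynomial of degree <= n in r, and its n-th difference in N at N = 0 is
   r^n p(r).  Hence r^n p(r) has degree <= n, i.e. p is constant, and
   a_n(t, s) = p(1) / n! = p(0) / n! = a_n(0, s). *)

Set Implicit Arguments. Unset Strict Implicit.

Section ForwardDifference.
Variables (C : numFieldType) (X : lmodType C).

Definition delta (f : nat -> X) : nat -> X := fun m => f m.+1 - f m.

Lemma iter_delta0 d : iter d delta (fun _ => 0) = fun _ => 0.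
Proof.
elim: d => [//|d IH]; rewrite iterS IH /delta.
by apply: funext => r; rewrite subr0.
Qed.

Lemma iter_delta_sum (I : finType) d (f : I -> nat -> X) :
  iter d delta (fun r => \sum_i f i r) = fun r => \sum_i iter d delta (f i) r.
Proof.
elim: d => [//|d IH]; rewrite iterS IH /delta.
by apply: funext => r; rewrite sumrB.
Qed.

Lemma delta_monomial j (c : X) :
  delta (fun r => (r%:R : C) ^+ j *: c) =
  fun r => \sum_(i < j) (r%:R : C) ^+ i *: ('C(j, i)%:R *: c).
Proof.
apply: funext => r; rewrite /delta -scalerBl -natr1 exprD1n big_ord_recr /=.
rewrite binn mulr1n addrK scaler_suml; apply: eq_bigr => i _.
by rewrite scalerA mulr_natr.
Qed.

Lemma iter_delta_monomial_lt d j (c : X) : (j < d)%N ->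
  iter d delta (fun r => (r%:R : C) ^+ j *: c) = fun _ => 0.
Proof.
elim: d j c => [//|d IH] j c ltjd.
rewrite iterSr delta_monomial iter_delta_sum; apply: funext => r.
by apply: big1 => i _; rewrite IH //; apply: leq_trans (ltn_ord i) _.
Qed.

Lemma iter_delta_monomial d (c : X) :
  iter d delta (fun r => (r%:R : C) ^+ d *: c) = fun _ => d`!%:R *: c.
Proof.
elim: d c => [|d IH] c; first by apply: funext => r /=; rewrite expr0 !scale1r.
rewrite iterSr delta_monomial iter_delta_sum; apply: funext => r.
rewrite big_ord_recr /= big1 ?add0r => [|i _]; last by rewrite iter_delta_monomial_lt.
by rewrite IH scalerA binSn -natrM factS mulnC.
Qed.

Lemma iter_delta_poly_top n (c : nat -> X) :
  iter n delta (fun m => \sum_(j < n.+1) (m%:R : C) ^+ j *: c j) =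
  fun _ => n`!%:R *: c n.
Proof.
rewrite iter_delta_sum; apply: funext => r.
rewrite big_ord_recr /= big1 ?add0r => [|i _]; last by rewrite iter_delta_monomial_lt.
by rewrite iter_delta_monomial.
Qed.

Lemma iter_delta_poly_eq0 n (q : nat -> X) :
  poly_seq_le n q -> iter n.+1 delta q = fun _ => 0.
Proof.
move=> [c /funext ->]; rewrite iter_delta_sum; apply: funext => r.
by apply: big1 => i _; rewrite iter_delta_monomial_lt.
Qed.

Lemma poly_seq_leB n (q1 q2 : nat -> X) :
  poly_seq_le n q1 -> poly_seq_le n q2 -> poly_seq_le n (fun m => q1 m - q2 m).
Proof.
move=> [c1 h1] [c2 h2]; exists (fun j => c1 j - c2 j) => m.
by rewrite h1 h2 -sumrB; apply: eq_bigr => i _; rewrite scalerBr.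
Qed.

Lemma poly_seq_le_iter_delta n (F : nat -> nat -> X) :
  (forall m, poly_seq_le n (fun r => F r m)) ->
  forall k m, poly_seq_le n (fun r => iter k delta (F r) m).
Proof.
move=> polyF; elim=> [|k IH] m; first exact: polyF.
exact: poly_seq_leB (IH m.+1) (IH m).
Qed.

Lemma iter_delta_shifted_poly_eq0 d k N (b : nat -> X) :
  iter d delta (fun r => \sum_(i < N) (r%:R : C) ^+ (k + i) *: b i) = (fun _ => 0) ->
  forall i, (i < N)%N -> (d <= k + i)%N -> b i = 0.
Proof.
elim: N => [//|N IH] hd.
have topN : (d <= k + N)%N -> b N = 0.
  move=> ledk; have fact_neq0 : ((k + N)`!%:R : C) != 0.
    by rewrite pnatr_eq0 -lt0n fact_gt0.
  apply: (scalerI fact_neq0); rewrite scaler0.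
  have := iterD (k + N - d) d delta
    (fun r => \sum_(i < N.+1) (r%:R : C) ^+ (k + i) *: b i).
  rewrite subnK // hd iter_delta0 iter_delta_sum => /(congr1 (fun f => f 0%N)).
  rewrite big_ord_recr /= big1 ?add0r => [|i _]; last first.
    by rewrite iter_delta_monomial_lt // ltn_add2l.
  by rewrite iter_delta_monomial.
have last_eq0 :
    iter d delta (fun r => (r%:R : C) ^+ (k + N) *: b N) = fun _ => 0.
  have [ledk | ltkd] := leqP d (k + N); last exact: iter_delta_monomial_lt.
  by rewrite topN // (funext (fun r => scaler0 _ _)) iter_delta0.
have hdN :
    iter d delta (fun r => \sum_(i < N) (r%:R : C) ^+ (k + i) *: b i) = fun _ => 0.
  apply: funext => r; move: (congr1 (fun f => f r) hd).
  by rewrite !iter_delta_sum big_ord_recr /= last_eq0 addr0.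
move=> i; rewrite ltnS leq_eqVlt => /orP[/eqP -> //|ltiN]; exact: IH.
Qed.

End ForwardDifference.

Arguments delta {C X}.

Section TopCoefficient.
Variables (C : numFieldType) (J : nmodType) (X : lmodType C) (n : nat).
Variables (phi : J -> X) (a : nat -> J -> J -> X).
Hypothesis phi_poly : forall s t : J, poly_seq_le n (fun m => phi (s + t *+ m)).
Hypothesis phi_coef : forall (t s : J) (m : nat),
  phi (t + s *+ m) = \sum_(j < n.+1) (m%:R : C) ^+ j *: a j t s.

Lemma top_coef_poly (t s : J) :
  exists b : nat -> X, forall r : nat,
    n`!%:R *: a n (t *+ r) s = \sum_(i < n.+1) (r%:R : C) ^+ i *: b i.
Proof.
pose f r m := phi (t *+ r + s *+ m).
have polyf m : poly_seq_le n (fun r => f r m).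
  by have [c hc] := phi_poly (s *+ m) t; exists c => r; rewrite /f addrC hc.
have [b hb] := poly_seq_le_iter_delta polyf n 0; exists b => r.
rewrite -hb /f (funext (phi_coef (t *+ r) s)).
by rewrite (iter_delta_poly_top n (fun j => a j (t *+ r) s)).
Qed.

Lemma top_coef_poly_shift (t s : J) (b : nat -> X) :
  (forall r, n`!%:R *: a n (t *+ r) s = \sum_(i < n.+1) (r%:R : C) ^+ i *: b i) ->
  iter n.+1 delta (fun r => \sum_(i < n.+1) (r%:R : C) ^+ (n + i) *: b i) =
  fun _ => 0.
Proof.
move=> hb; pose f r N := phi (t *+ r + s *+ (N * r)).
have polyf N : poly_seq_le n (fun r => f r N).
  have [c hc] := phi_poly 0 (t + s *+ N); exists c => r.
  by rewrite /f -hc add0r mulrnDl mulrnA.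
have diff_f r : iter n delta (f r) 0%N =
    \sum_(i < n.+1) (r%:R : C) ^+ (n + i) *: b i.
  have -> : f r = fun N => \sum_(j < n.+1) (N%:R : C) ^+ j *:
      ((r%:R : C) ^+ j *: a j (t *+ r) s).
    apply: funext => N; rewrite /f phi_coef; apply: eq_bigr => j _.
    by rewrite scalerA natrM exprMn.
  rewrite (iter_delta_poly_top n (fun j => (r%:R : C) ^+ j *: a j (t *+ r) s)).
  rewrite scalerA mulrC -scalerA hb scaler_sumr.
  by apply: eq_bigr => i _; rewrite scalerA -exprD.
rewrite -(funext diff_f); apply: iter_delta_poly_eq0.
exact: poly_seq_le_iter_delta.
Qed.

Lemma top_coef_translation_invariant (t s : J) : a n t s = a n 0 s.
Proof.
have [b hb] := top_coef_poly t s.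
have b_eq0 := iter_delta_shifted_poly_eq0 (top_coef_poly_shift hb).
have const r : n`!%:R *: a n (t *+ r) s = b 0%N.
  rewrite hb big_ord_recl expr0 scale1r big1 ?addr0 // => i _.
  by rewrite b_eq0 ?scaler0 // lift0 addnS ltnS leq_addr.
have nfact_neq0 : (n`!%:R : C) != 0 by rewrite pnatr_eq0 -lt0n fact_gt0.
have := const 1%N; rewrite -(const 0%N) mulr1n mulr0n => same_scaled.
by rewrite -[a n t s](scalerK nfact_neq0) same_scaled scalerK.
Qed.

End TopCoefficient.

Theorem lemma2p1 (R : realType) (J : TopologicalNmodule.type)
  (X : topologicalLmodType R[i]) (n : nat) (phi : J -> X)
  (a : nat -> J -> J -> X) :
  Pn n phi ->
  (forall (t s : J) (m : nat),
      phi (t + s *+ m) = \sum_(j < n.+1) ((m%:R : R[i]) ^+ j) *: a j t s) ->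
  forall t s : J, a n t s = a n 0 s.
Proof. by move=> [_ phi_poly] phi_coef; exact: top_coef_translation_invariant. Qed.
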